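(* Let $\mathbb{0}=\{x\in\omega^\omega : x(n)=0 \text{ for all but finitely many } n\}$. Then every maximal chain of $(\omega^\omega\setminus\mathbb{0},\le^* )$ has size at least $\mathfrak{c}$; consequently $\mathfrak{mc}(\omega^\omega\setminus\mathbb{0},\le^* )=\mathfrak{c}$.
   Context: For $x,y\in\omega^\omega$, $x\le^* y$ means $x(n)\le y(n)$ for all but finitely many $n$. For a poset (or preorder) $(P,\le)$, a chain is a subset whose elements are pairwise comparable, and $\mathfrak{mc}(P)$ is the minimal cardinality of a maximal (with respect to inclusion) chain of $P$. $\mathfrak{c}=2^{\aleph_0}$. *)

Definition baire := nat -> nat.

Definition le_star (x y : baire) : Prop :=
  exists N : nat, forall n : nat, N <= n -> x n <= y n.

Definition zero_set (x : baire) : Prop :=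
  exists N : nat, forall n : nat, N <= n -> x n = 0.

Definition P (x : baire) : Prop := ~ zero_set x.

Definition is_chain (C : baire -> Prop) : Prop :=
  (forall x, C x -> P x) /\
  (forall x y, C x -> C y -> le_star x y \/ le_star y x).

Definition is_maximal_chain (C : baire -> Prop) : Prop :=
  is_chain C /\
  (forall D : baire -> Prop, is_chain D -> (forall x, C x -> D x) ->
     forall x, D x -> C x).

Definition card_ge_continuum (C : baire -> Prop) : Prop :=
  exists f : (nat -> bool) -> baire,
    (forall a b, f a = f b -> a = b) /\ (forall a, C (f a)).

Definition card_le_continuum (C : baire -> Prop) : Prop :=
  exists g : baire -> (nat -> bool),
    forall x y, C x -> C y -> g x = g y -> x = y.

From Stdlib Require Import Arith List Lia Classical ClassicalEpsilon
  FunctionalExtensionality Cantor.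
From mathcomp Require classical_sets.

(* Let C be a maximal chain of (omega^omega \ 0, <=* ).
   (1) Splitting: if l <* u, the sequence that follows u or l and switches
       sides at every position where l n < u n lies strictly between them;
       it is not eventually zero because it is not <=* l.
   (2) By maximality, any such split point of a gap of C can be added to C,
       so C is densely ordered by <*, and it contains a pair l <* u.
   (3) Interpolation: for an <=*-increasing sequence below an <=*-decreasing
       one there is a sequence between them (a diagonal bounded maximum).
   (4) Bisecting [l, u] twice per step inside C along a branch a : nat -> bool
       gives nested intervals; by (3) and maximality some point of C lies in
       all of them, and distinct branches are separated at the first index
       where they differ.  This yields an injection 2^omega -> C.  Zorn's lemma gives a maximal chain, and every subset of
   omega^omega injects into 2^omega by coding graphs with Cantor pairing. *)

Definition lt_star (x y : baire) : Prop := le_star x y /\ ~ le_star y x.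

Lemma le_star_refl x : le_star x x.
Proof. exists 0; intros; lia. Qed.

Lemma le_star_trans x y z : le_star x y -> le_star y z -> le_star x z.
Proof.
  intros [N1 H1] [N2 H2]; exists (N1 + N2); intros n Hn.
  specialize (H1 n ltac:(lia)); specialize (H2 n ltac:(lia)); lia.
Qed.

Lemma not_le_star_frequently x y :
  ~ le_star y x -> forall N, exists n, N <= n /\ x n < y n.
Proof.
  intros H N. apply NNPP; intro Hnone. apply H. exists N; intros n Hn.
  destruct (le_lt_dec (y n) (x n)); auto.
  exfalso; apply Hnone; exists n; auto.
Qed.

Lemma P_of_not_le_star x y : ~ le_star y x -> P y.
Proof. intros H [N HN]; apply H; exists N; intros n Hn; rewrite HN; lia. Qed.

Lemma P_upward x y : P x -> le_star x y -> P y.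
Proof.
  intros Px [N1 H1] [N2 H2]; apply Px; exists (N1 + N2); intros n Hn.
  specialize (H1 n ltac:(lia)); specialize (H2 n ltac:(lia)); lia.
Qed.

Section Split.
Variables l u : baire.

Fixpoint side (n : nat) : bool :=
  match n with
  | 0 => true
  | S n' => if l n' <? u n' then negb (side n') else side n'
  end.

Lemma side_change n m : n <= m -> side n <> side m ->
  exists d, n <= d < m /\ l d < u d /\ side d = side n.
Proof.
  induction 1 as [|m Hnm IH]; intros Hneq; [congruence|].
  destruct (Bool.bool_dec (side n) (side m)) as [E|E].
  - simpl in Hneq. destruct (l m <? u m) eqn:Hlt.
    + exists m; split; [lia | split; [apply Nat.ltb_lt; auto | congruence]].
    + congruence.
  - destruct (IH E) as [d Hd]; exists d; intuition lia.
Qed.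

Hypothesis l_lt_u_often : forall N, exists n, N <= n /\ l n < u n.

Lemma side_hits N b : exists d, N <= d /\ l d < u d /\ side d = b.
Proof.
  destruct (l_lt_u_often N) as [d1 [Hd1 Hs1]].
  destruct (Bool.bool_dec (side d1) b) as [E1|E1]; [exists d1; auto|].
  assert (Hnext : side (S d1) = b).
  { simpl. apply Nat.ltb_lt in Hs1; rewrite Hs1. destruct (side d1), b; simpl; congruence. }
  destruct (l_lt_u_often (S d1)) as [d2 [Hd2 Hs2]].
  destruct (Bool.bool_dec (side d2) b) as [E2|E2]; [exists d2; split; [lia | auto]|].
  assert (Hchange : side (S d1) <> side d2) by congruence.
  destruct (side_change (S d1) d2 Hd2 Hchange) as [d [Hd [Hs Es]]].
  exists d; repeat split; auto; [lia | congruence].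
Qed.

Definition split_point : baire := fun n => if side n then u n else l n.

End Split.

Lemma split_gap l u : lt_star l u -> exists m, lt_star l m /\ lt_star m u.
Proof.
  intros [[N Hlu] Hul]. pose proof (not_le_star_frequently _ _ Hul) as Hoften.
  exists (split_point l u); unfold split_point; repeat split.
  - exists N; intros n Hn; specialize (Hlu n Hn); destruct (side l u n); lia.
  - intros [M HM]. destruct (side_hits l u Hoften M true) as [d [Hd [Hs E]]].
    specialize (HM d Hd); rewrite E in HM; lia.
  - exists N; intros n Hn; specialize (Hlu n Hn); destruct (side l u n); lia.
  - intros [M HM]. destruct (side_hits l u Hoften M false) as [d [Hd [Hs E]]].
    specialize (HM d Hd); rewrite E in HM; lia.
Qed.

Section MaximalChain.
Variable C : baire -> Prop.
Hypothesis HC : is_maximal_chain C.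

Lemma chain_comparable x y : C x -> C y -> le_star x y \/ le_star y x.
Proof. destruct HC as [[_ H] _]; auto. Qed.

Lemma chain_absorbs x : P x ->
  (forall c, C c -> le_star c x \/ le_star x c) -> C x.
Proof.
  intros Px Hx. destruct HC as [[HP Hc] Hmax].
  apply (Hmax (fun y => C y \/ y = x)); auto. split.
  - intros y [Hy | ->]; auto.
  - intros y z [Hy | Ey] [Hz | Ez].
    + auto.
    + rewrite Ez; auto.
    + rewrite Ey; destruct (Hx z Hz); auto.
    + rewrite Ey, Ez; left; apply le_star_refl.
Qed.

(* A strict gap below a member u of C, whose lower end l is comparable with
   all of C, contains a member of C.  Used with l in C and with l = 0. *)
Lemma chain_meets_gap l u : C u -> lt_star l u ->
  (forall c, C c -> le_star c l \/ le_star l c) ->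
  exists m, C m /\ lt_star l m /\ lt_star m u.
Proof.
  intros Cu Hlu Hl. apply NNPP; intro Hnone.
  destruct (split_gap l u Hlu) as [m [[Hlm Hml] [Hmu Hum]]].
  apply Hnone; exists m; repeat split; auto.
  apply chain_absorbs; [exact (P_of_not_le_star _ _ Hml)|].
  intros c Cc. destruct (Hl c Cc) as [Hcl | Hlc].
  { left; eapply le_star_trans; eauto. }
  destruct (chain_comparable c u Cc Cu) as [Hcu | Huc].
  2: { right; eapply le_star_trans; eauto. }
  destruct (classic (le_star c l)) as [Hcl | Hcl].
  { left; eapply le_star_trans; eauto. }
  destruct (classic (le_star u c)) as [Huc | Huc].
  { right; eapply le_star_trans; eauto. }
  exfalso; apply Hnone; exists c; repeat split; auto.
Qed.

Lemma chain_dense l u : C l -> C u -> lt_star l u ->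
  exists m, C m /\ lt_star l m /\ lt_star m u.
Proof.
  intros Cl Cu Hlu. apply chain_meets_gap; auto.
  intros c Cc; apply chain_comparable; auto.
Qed.

(* C contains a strict pair: below any member there is another, found in the
   gap above the constant zero sequence. *)
Lemma chain_has_strict_pair : exists l u, C l /\ C u /\ lt_star l u.
Proof.
  destruct (classic (exists c, C c)) as [[u Cu] | Hempty].
  - destruct (chain_meets_gap (fun _ => 0) u Cu) as [l [Cl [_ Hlu]]].
    + split; [exists 0; intros; lia|].
      intros Hu0; destruct HC as [[HP _] _]; apply (HP u Cu).
      destruct Hu0 as [N HN]; exists N; intros n Hn; specialize (HN n Hn); lia.
    + intros c _; right; exists 0; intros; lia.
    + exists l, u; auto.
  - exfalso; apply Hempty; exists (fun _ => 1). apply chain_absorbs.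
    + intros [N HN]; specialize (HN N (le_n _)); discriminate.
    + intros c Cc; exfalso; eauto.
Qed.

End MaximalChain.

Lemma eventually_all_below (Q : nat -> nat -> Prop) k :
  (forall i, i <= k -> exists N, forall n, N <= n -> Q i n) ->
  exists N, forall n, N <= n -> forall i, i <= k -> Q i n.
Proof.
  induction k as [|k IH]; intros H.
  - destruct (H 0 (le_n _)) as [N HN]. exists N; intros n Hn i Hi.
    replace i with 0 by lia; auto.
  - destruct IH as [N1 H1]; [intros; apply H; lia|].
    destruct (H (S k) (le_n _)) as [N2 H2].
    exists (N1 + N2); intros n Hn i Hi.
    destruct (Nat.eq_dec i (S k)); [subst; apply H2 | apply H1]; lia.
Qed.

Lemma interpolation (a b : nat -> baire) :
  (forall n, le_star (a n) (a (S n))) -> (forall n, le_star (b (S n)) (b n)) ->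
  (forall n, le_star (a n) (b n)) ->
  exists x, forall n, le_star (a n) x /\ le_star x (b n).
Proof.
  intros Ha Hb Hab.
  assert (Ha' : forall i k, i <= k -> le_star (a i) (a k)).
  { induction 1; [apply le_star_refl | eapply le_star_trans; eauto]. }
  assert (Hb' : forall i k, i <= k -> le_star (b k) (b i)).
  { induction 1; [apply le_star_refl | eapply le_star_trans; eauto]. }
  assert (HN : forall k, exists N, forall n, N <= n -> forall i, i <= k ->
     a i n <= a k n /\ a k n <= b k n /\ b k n <= b i n).
  { intros k. apply eventually_all_below. intros i Hi.
    destruct (Ha' i k Hi) as [N1 H1], (Hb' i k Hi) as [N2 H2], (Hab k) as [N3 H3].
    exists (N1 + N2 + N3); intros n Hn; repeat split;
      [apply H1 | apply H3 | apply H2]; lia. }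
  destruct (choice _ HN) as [N HNs].
  (* x n is the largest a k n over the k <= n that are already settled at n. *)
  set (terms n := map (fun k => if N k <=? n then a k n else 0) (seq 0 (S n))).
  exists (fun n => list_max (terms n)); intros j; split.
  - exists (N j + j); intros n Hn.
    assert (Hall := proj1 (list_max_le (terms n) _) (le_n _)).
    unfold terms in Hall; rewrite Forall_map, Forall_forall in Hall.
    assert (Hj : In j (seq 0 (S n))) by (apply in_seq; lia).
    specialize (Hall j Hj); simpl in Hall.
    replace (N j <=? n) with true in Hall by (symmetry; apply Nat.leb_le; lia); exact Hall.
  - exists (N j); intros n Hn. apply list_max_le.
    unfold terms; rewrite Forall_map, Forall_forall; intros k _.
    destruct (N k <=? n) eqn:Hk; [apply Nat.leb_le in Hk | lia].
    destruct (le_lt_dec j k) as [Hjk | Hkj].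
    + destruct (HNs k n Hk j Hjk) as [_ [H1 H2]]; lia.
    + destruct (HNs j n Hn k ltac:(lia)) as [H1 [H2 _]]; lia.
Qed.

Section Tree.
Variable C : baire -> Prop.
Hypothesis HC : is_maximal_chain C.

Definition inhabited_baire : inhabited baire := inhabits (fun _ => 0).

Definition mid (l u : baire) : baire :=
  epsilon inhabited_baire (fun m => C m /\ lt_star l m /\ lt_star m u).

Lemma mid_spec l u : C l -> C u -> lt_star l u ->
  C (mid l u) /\ lt_star l (mid l u) /\ lt_star (mid l u) u.
Proof. intros. unfold mid; apply epsilon_spec, chain_dense; auto. Qed.

Definition proper_interval (p : baire * baire) : Prop :=
  C (fst p) /\ C (snd p) /\ lt_star (fst p) (snd p).

Definition root : baire * baire :=
  epsilon (inhabits (fun _ => 0, fun _ => 0)) proper_interval.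

(* Along branch a, split [l, u] at m1 < m2 and keep [m2, u] on true and
   [l, m1] on false; the gap between m1 and m2 separates the two choices. *)
Fixpoint interval (a : nat -> bool) (n : nat) : baire * baire :=
  match n with
  | 0 => root
  | S n' =>
      let '(l, u) := interval a n' in
      let m1 := mid l u in
      if a n' then (mid m1 u, u) else (l, m1)
  end.

Lemma interval_proper a n : proper_interval (interval a n).
Proof.
  induction n as [|n IH]; simpl.
  - unfold root; apply (epsilon_spec _ proper_interval). destruct (chain_has_strict_pair C HC) as [l [u H]].
    exists (l, u); exact H.
  - unfold proper_interval in *; destruct (interval a n) as [l u], IH as [Cl [Cu Hlu]]; simpl in *.
    destruct (mid_spec l u Cl Cu Hlu) as [M1 [M2 M3]].
    destruct (mid_spec _ u M1 Cu M3) as [K1 [K2 K3]].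
    destruct (a n); simpl; auto.
Qed.

Lemma bisection_spec a n :
  let '(l, u) := interval a n in
  lt_star l (mid l u) /\ lt_star (mid l u) (mid (mid l u) u) /\
  lt_star (mid (mid l u) u) u.
Proof.
  pose proof (interval_proper a n) as Hp.
  destruct (interval a n) as [l u], Hp as [Cl [Cu Hlu]]; simpl in *.
  destruct (mid_spec l u Cl Cu Hlu) as [M1 [M2 M3]].
  destruct (mid_spec _ u M1 Cu M3) as [_ [K2 K3]]; auto.
Qed.

Lemma interval_nested a n :
  le_star (fst (interval a n)) (fst (interval a (S n))) /\
  le_star (snd (interval a (S n))) (snd (interval a n)).
Proof.
  pose proof (bisection_spec a n) as Hb; simpl.
  destruct (interval a n) as [l u], Hb as [[H1 _] [[H2 _] [H3 _]]].
  destruct (a n); simpl; split; try apply le_star_refl.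
  - exact (le_star_trans _ _ _ H1 H2).
  - exact (le_star_trans _ _ _ H2 H3).
Qed.

Definition in_branch (a : nat -> bool) (e : baire) : Prop :=
  C e /\ forall n, le_star (fst (interval a n)) e /\ le_star e (snd (interval a n)).

(* Some member of C lies in all intervals of a branch: an interpolant is
   comparable with every member of C, hence in C by maximality, unless a
   member of C already lies in all intervals. *)
Lemma in_branch_exists a : exists e, in_branch a e.
Proof.
  apply NNPP; intro Hnone.
  destruct (interpolation (fun n => fst (interval a n)) (fun n => snd (interval a n)))
    as [x Hx]; try (intros n; apply (interval_nested a n)).
  { intros n; destruct (interval_proper a n) as [_ [_ [Hlu _]]]; exact Hlu. }
  apply Hnone; exists x; split; auto.
  apply (chain_absorbs C HC).
  - destruct (interval_proper a 0) as [Cl _], HC as [[HP _] _].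
    exact (P_upward _ _ (HP _ Cl) (proj1 (Hx 0))).
  - intros c Cc.
    destruct (classic (forall n, le_star (fst (interval a n)) c /\
                                 le_star c (snd (interval a n)))) as [Hin | Hout].
    { exfalso; apply Hnone; exists c; split; auto. }
    apply not_all_ex_not in Hout; destruct Hout as [n Hout].
    destruct (interval_proper a n) as [Cl [Cu _]].
    destruct (chain_comparable C HC c _ Cc Cl) as [Hcl | Hlc].
    { left; eapply le_star_trans; [exact Hcl | apply Hx]. }
    destruct (chain_comparable C HC c _ Cc Cu) as [Hcu | Huc].
    + exfalso; auto.
    + right; eapply le_star_trans; [apply Hx | exact Huc].
Qed.

Definition branch_point (a : nat -> bool) : baire := epsilon inhabited_baire (in_branch a).

Lemma branch_point_spec a : in_branch a (branch_point a).
Proof. unfold branch_point; apply epsilon_spec, in_branch_exists. Qed.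

Lemma interval_agree a b k : (forall i, i < k -> a i = b i) -> interval a k = interval b k.
Proof.
  induction k as [|k IH]; intros H; simpl; auto.
  rewrite IH by (intros; apply H; lia). rewrite (H k) by lia; auto.
Qed.

(* Branches that agree before k and go right (a) resp. left (b) at k have
   branch points separated by the gap between the two bisection points. *)
Lemma branch_points_separated a b k :
  interval a k = interval b k -> a k = true -> b k = false ->
  ~ le_star (branch_point a) (branch_point b).
Proof.
  intros Hab Ha Hb Hle.
  pose proof (bisection_spec a k) as Hbis.
  destruct (branch_point_spec a) as [_ Fa], (branch_point_spec b) as [_ Fb].
  specialize (Fa (S k)); specialize (Fb (S k)); simpl in Fa, Fb.
  rewrite <- Hab in Fb. destruct (interval a k) as [l u].
  rewrite Ha in Fa; rewrite Hb in Fb; simpl in Fa, Fb.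
  destruct Hbis as [_ [[_ Hsep] _]]. apply Hsep.
  eapply le_star_trans; [apply Fa|]. eapply le_star_trans; [exact Hle | apply Fb].
Qed.

Lemma branch_point_injective a b : branch_point a = branch_point b -> a = b.
Proof.
  intros Hf.
  assert (Hagree : forall k i, i < k -> a i = b i).
  { induction k as [|k IH]; intros i Hi; [lia|].
    assert (Hk : a k = b k).
    { pose proof (interval_agree a b k IH) as Hint.
      destruct (a k) eqn:Ea, (b k) eqn:Eb; auto; exfalso.
      - apply (branch_points_separated a b k Hint Ea Eb); rewrite Hf; apply le_star_refl.
      - apply (branch_points_separated b a k (eq_sym Hint) Eb Ea); rewrite Hf; apply le_star_refl. }
    destruct (Nat.eq_dec i k); [subst; auto | apply IH; lia]. }
  apply functional_extensionality; intro i; apply (Hagree (S i)); lia.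
Qed.

End Tree.

Theorem maximal_chain_ge_continuum C : is_maximal_chain C -> card_ge_continuum C.
Proof.
  intros HC. exists (branch_point C).
  split; [apply branch_point_injective; auto | intros a; apply branch_point_spec, HC].
Qed.

Lemma exists_maximal_chain : exists C : baire -> Prop, is_maximal_chain C.
Proof.
  destruct (@classical_sets.Zorn_bigcup baire is_chain) as [A [HA Hmax]].
  - intros F HF Htot. split.
    + intros x [X FX Xx]. exact (proj1 (HF X FX) x Xx).
    + intros x y [X FX Xx] [Y FY Yy].
      destruct (Htot X Y FX FY) as [S | S].
      * exact (proj2 (HF Y FY) x y (S x Xx) Yy).
      * exact (proj2 (HF X FX) x y Xx (S y Yy)).
  - exists A; split; auto.
    intros D HD AD x Dx. apply NNPP; intros Ax.
    apply (Hmax D); auto. split; [exact AD | intros DA; exact (Ax (DA x Dx))].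
Qed.

Definition graph_code (x : baire) : nat -> bool :=
  fun m => let p := Cantor.of_nat m in Nat.eqb (x (fst p)) (snd p).

Lemma graph_code_pair x n k : graph_code x (Cantor.to_nat (n, k)) = Nat.eqb (x n) k.
Proof. unfold graph_code. rewrite Cantor.cancel_of_to. reflexivity. Qed.

Lemma graph_code_injective x y : graph_code x = graph_code y -> x = y.
Proof.
  intros E. apply functional_extensionality; intro n.
  assert (H : graph_code y (Cantor.to_nat (n, x n)) = true)
    by (rewrite <- E, graph_code_pair; apply Nat.eqb_refl).
  rewrite graph_code_pair in H; symmetry; apply Nat.eqb_eq; exact H.
Qed.

Theorem mainTheorem2 :
  (forall C : baire -> Prop, is_maximal_chain C -> card_ge_continuum C) /\
  (exists C : baire -> Prop, is_maximal_chain C /\ card_le_continuum C).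
Proof.
  split; [exact maximal_chain_ge_continuum|].
  destruct exists_maximal_chain as [C HC].
  exists C; split; [exact HC|].
  exists graph_code; intros x y _ _; apply graph_code_injective.
Qed.
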